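(* Let $(X,\rho)$ be a compact metric space with at least two points and let $T\colon X\to X$ be continuous and topologically weakly mixing. Then for every $d>1$ there is $\delta_d>0$ such that the set of $\delta_d$-Li-Yorke $d$-tuples is residual in $X^d$.
   Context: $T$ is topologically weakly mixing if $T\times T$ is topologically transitive on $X\times X$. A $d$-tuple is $\delta$-Li-Yorke if $\liminf_n\max_{i,j}\rho(T^nx_i,T^nx_j)=0$ and $\limsup_n\min_{i\ne j}\rho(T^nx_i,T^nx_j)>\delta$. Residual means containing a dense $G_\delta$ set. *)

From Stdlib Require Import Reals.
Open Scope R_scope.

Definition is_metric {X : Type} (rho : X -> X -> R) : Prop :=
  (forall x y, 0 <= rho x y) /\
  (forall x y, rho x y = 0 <-> x = y) /\
  (forall x y, rho x y = rho y x) /\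
  (forall x y z, rho x z <= rho x y + rho y z).

Definition open_in {X : Type} (rho : X -> X -> R) (U : X -> Prop) : Prop :=
  forall x, U x -> exists eps, 0 < eps /\ forall y, rho x y < eps -> U y.

Definition compact_metric {X : Type} (rho : X -> X -> R) : Prop :=
  forall (I : Type) (U : I -> X -> Prop),
    (forall i, open_in rho (U i)) ->
    (forall x, exists i, U i x) ->
    exists l : list I, forall x, exists i, List.In i l /\ U i x.

Definition continuous_map {X : Type} (rho : X -> X -> R) (T : X -> X) : Prop :=
  forall x eps, 0 < eps -> exists del, 0 < del /\
    forall y, rho x y < del -> rho (T x) (T y) < eps.

Definition iterate {X : Type} (T : X -> X) (n : nat) (x : X) : X :=
  Nat.iter n T x.

Definition open_in2 {X : Type} (rho : X -> X -> R) (W : X * X -> Prop) : Prop :=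
  forall p, W p -> exists eps, 0 < eps /\
    forall q, rho (fst p) (fst q) < eps -> rho (snd p) (snd q) < eps -> W q.

(* T x T is topologically transitive on X x X:
   for nonempty open U, V there is n >= 1 with (T x T)^{-n} U meeting V. *)
Definition weakly_mixing {X : Type} (rho : X -> X -> R) (T : X -> X) : Prop :=
  forall U V : X * X -> Prop,
    open_in2 rho U -> open_in2 rho V ->
    (exists p, U p) -> (exists p, V p) ->
    exists n : nat, (1 <= n)%nat /\
      exists p, V p /\ U (iterate T n (fst p), iterate T n (snd p)).

Definition idx (d : nat) : Type := {i : nat | (i < d)%nat}.
Definition tuple_sp (X : Type) (d : nat) : Type := idx d -> X.

Definition open_in_d {X : Type} (rho : X -> X -> R) (d : nat)
    (W : tuple_sp X d -> Prop) : Prop :=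
  forall x, W x -> exists eps, 0 < eps /\
    forall y : tuple_sp X d, (forall i, rho (x i) (y i) < eps) -> W y.

Definition dense_in_d {X : Type} (rho : X -> X -> R) (d : nat)
    (S : tuple_sp X d -> Prop) : Prop :=
  forall W, open_in_d rho d W -> (exists x, W x) -> exists x, W x /\ S x.

Definition G_delta_d {X : Type} (rho : X -> X -> R) (d : nat)
    (S : tuple_sp X d -> Prop) : Prop :=
  exists W : nat -> tuple_sp X d -> Prop,
    (forall n, open_in_d rho d (W n)) /\
    (forall x, S x <-> forall n, W n x).

Definition residual_d {X : Type} (rho : X -> X -> R) (d : nat)
    (S : tuple_sp X d -> Prop) : Prop :=
  exists G, G_delta_d rho d G /\ dense_in_d rho d G /\ forall x, G x -> S x.

(* delta-Li-Yorke d-tuple: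
   liminf_n max_{i,j} rho(T^n x_i, T^n x_j) = 0  (the sequence is >= 0), and
   limsup_n min_{i<>j} rho(T^n x_i, T^n x_j) > delta. *)
Definition li_yorke_tuple {X : Type} (rho : X -> X -> R) (T : X -> X)
    (d : nat) (delta : R) (x : tuple_sp X d) : Prop :=
  (forall eps, 0 < eps -> forall N : nat, exists n : nat, (N <= n)%nat /\
     forall i j : idx d, rho (iterate T n (x i)) (iterate T n (x j)) < eps) /\
  (exists c, delta < c /\ forall N : nat, exists n : nat, (N <= n)%nat /\
     forall i j : idx d, proj1_sig i <> proj1_sig j ->
       c < rho (iterate T n (x i)) (iterate T n (x j))).

From Stdlib Require Import Reals Lra Lia List Classical ClassicalEpsilon.
Open Scope R_scope.

(* Weak mixing lets T carry finitely many pairs of nonempty open sets into each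
   other at one common time (Furstenberg's trick); it also forces T to be onto
   and X to have no isolated points, so there are points p_0, ..., p_(d-1) at
   mutual distance > s for some s > 0.  For each m, the tuples some iterate T^n
   (n >= m) of which has diameter < 1/(m+1) form an open set, dense because it
   contains the tuples sent near a single point; likewise for mutual distances
   > s/2, using the tuples sent within s/4 of the p_j.  By Baire's theorem in
   the compact space X^d the intersection over all m is a dense G_delta, and it
   consists of (s/4)-Li-Yorke tuples. *)

Lemma iterate_add {X : Type} (T : X -> X) m n x :
  iterate T (m + n) x = iterate T m (iterate T n x).
Proof. apply Nat.iter_add. Qed.

Lemma exists_inv_succ_lt eps N : 0 < eps -> exists k, (N <= k)%nat /\ / INR (S k) < eps.
Proof.
  intros Heps. destruct (archimed_cor1 eps Heps) as [M [HM HM0]].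
  exists (N + M)%nat. split; [lia |].
  apply Rle_lt_trans with (/ INR M); [| exact HM].
  apply Rinv_le_contravar; [apply lt_0_INR; exact HM0 | apply le_INR; lia].
Qed.

Lemma idx_listing d : exists l : list (idx d), forall i, In i l.
Proof.
  induction d as [|d [l IH]].
  - exists nil. intros [i Hi]. lia.
  - exists (exist _ d (Nat.lt_succ_diag_r d) ::
      map (fun j : idx d => exist (fun i => (i < S d)%nat) (proj1_sig j)
             (Nat.lt_lt_succ_r _ _ (proj2_sig j))) l).
    intros [i Hi]. destruct (Nat.eq_dec i d) as [-> | Hne].
    + left. f_equal. apply proof_irrelevance.
    + right. assert (Hi' : (i < d)%nat) by lia.
      apply in_map_iff. exists (exist _ i Hi'). split; [| apply IH].
      simpl. f_equal. apply proof_irrelevance.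
Qed.

Lemma idx_uniform d (P : idx d -> R -> Prop) :
  (forall i e e', 0 < e' <= e -> P i e -> P i e') ->
  (forall i, exists e, 0 < e /\ P i e) -> exists e, 0 < e /\ forall i, P i e.
Proof.
  intros Hanti Hex. destruct (idx_listing d) as [l Hl].
  assert (Hlist : exists e, 0 < e /\ forall i, In i l -> P i e).
  { clear Hl. induction l as [|i0 l IH].
    - exists 1. split; [lra | intros i []].
    - destruct IH as [e1 [He1 H1]]. destruct (Hex i0) as [e2 [He2 H2]].
      assert (Hmin : 0 < Rmin e1 e2) by (apply Rmin_glb_lt; assumption).
      exists (Rmin e1 e2). split; [exact Hmin |]. intros i [-> | Hi].
      + apply (Hanti i e2); [split; [exact Hmin | apply Rmin_r] | exact H2].
      + apply (Hanti i e1); [split; [exact Hmin | apply Rmin_l] | exact (H1 i Hi)]. }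
  destruct Hlist as [e [He H]]. exists e. split; [exact He |]. intros i. exact (H i (Hl i)).
Qed.

Section CompactDynamics.

Variables (X : Type) (rho : X -> X -> R).
Hypothesis Hm : is_metric rho.

Lemma dist_ge0 x y : 0 <= rho x y.
Proof. destruct Hm as [H _]; apply H. Qed.

Lemma dist_refl x : rho x x = 0.
Proof. destruct Hm as [_ [H _]]; apply H; reflexivity. Qed.

Lemma dist_sym x y : rho x y = rho y x.
Proof. destruct Hm as [_ [_ [H _]]]; apply H. Qed.

Lemma dist_triangle x y z : rho x z <= rho x y + rho y z.
Proof. destruct Hm as [_ [_ [_ H]]]; apply H. Qed.

Lemma dist_gt0 x y : x <> y -> 0 < rho x y.
Proof.
  intros Hxy. destruct (Rle_lt_or_eq_dec _ _ (dist_ge0 x y)) as [H | H]; [exact H |].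
  destruct Hm as [_ [Heq _]]. exfalso. apply Hxy, Heq. symmetry. exact H.
Qed.

Lemma open_ball x r : open_in rho (fun y => rho x y < r).
Proof.
  intros y Hy. exists (r - rho x y). split; [lra |].
  intros z Hz. pose proof (dist_triangle x y z). lra.
Qed.

Lemma open_in_inter U V : open_in rho U -> open_in rho V -> open_in rho (fun x => U x /\ V x).
Proof.
  intros HU HV x [Ux Vx]. destruct (HU x Ux) as [e1 [He1 H1]].
  destruct (HV x Vx) as [e2 [He2 H2]]. exists (Rmin e1 e2). split.
  - apply Rmin_glb_lt; assumption.
  - intros y Hy. split; [apply H1 | apply H2];
      eapply Rlt_le_trans; eauto; [apply Rmin_l | apply Rmin_r].
Qed.

Lemma open_in_preimage f U :
  continuous_map rho f -> open_in rho U -> open_in rho (fun x => U (f x)).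
Proof.
  intros Hf HU x Hx. destruct (HU _ Hx) as [e [He H]].
  destruct (Hf x e He) as [del [Hdel H']]. exists del. split; [exact Hdel |].
  intros y Hy. apply H, H', Hy.
Qed.

Lemma open_in2_prod U V :
  open_in rho U -> open_in rho V -> open_in2 rho (fun q => U (fst q) /\ V (snd q)).
Proof.
  intros HU HV q [Uq Vq]. destruct (HU _ Uq) as [e1 [He1 H1]].
  destruct (HV _ Vq) as [e2 [He2 H2]]. exists (Rmin e1 e2). split.
  - apply Rmin_glb_lt; assumption.
  - intros q' Hq1 Hq2. split; [apply H1 | apply H2];
      eapply Rlt_le_trans; eauto; [apply Rmin_l | apply Rmin_r].
Qed.

Lemma open_in2_dist_lt r : open_in2 rho (fun q => rho (fst q) (snd q) < r).
Proof.
  intros [u v] Huv. simpl in Huv. exists ((r - rho u v) / 2). split; [lra |].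
  intros [u' v'] Hu Hv. simpl in *.
  pose proof (dist_triangle u' u v'). pose proof (dist_triangle u v v').
  pose proof (dist_sym u' u). lra.
Qed.

Lemma open_in2_dist_gt c : open_in2 rho (fun q => c < rho (fst q) (snd q)).
Proof.
  intros [u v] Huv. simpl in Huv. exists ((rho u v - c) / 2). split; [lra |].
  intros [u' v'] Hu Hv. simpl in *.
  pose proof (dist_triangle u u' v). pose proof (dist_triangle u' v' v).
  pose proof (dist_sym v' v). lra.
Qed.

Lemma open_in2_impl (P : Prop) W :
  (P -> open_in2 rho W) -> open_in2 rho (fun q => P -> W q).
Proof.
  intros HW q Hq. destruct (classic P) as [HP | HnP].
  - destruct (HW HP q (Hq HP)) as [e [He H]]. exists e. split; [exact He |].
    intros q' H1 H2 _. apply H; assumption.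
  - exists 1. split; [lra |]. intros q' _ _ HP. contradiction.
Qed.

Hypothesis Hc : compact_metric rho.

Lemma compact_cover_nat_bounded (U : nat -> X -> Prop) :
  (forall k, open_in rho (U k)) -> (forall x, exists k, U k x) ->
  exists K, forall x, exists k, (k <= K)%nat /\ U k x.
Proof.
  intros HU Hcov. destruct (Hc nat U HU Hcov) as [l Hl].
  exists (list_max l). intros x. destruct (Hl x) as [k [Hk Hx]].
  exists k. split; [| exact Hx].
  exact (proj1 (Forall_forall _ l) (proj1 (list_max_le l _) (le_n _)) k Hk).
Qed.

Lemma compact_nested_balls (a : nat -> X) (r : nat -> R) :
  (forall k m, (k <= m)%nat -> rho (a k) (a m) <= r k) ->
  exists z, forall k, rho (a k) z <= r k.
Proof.
  intros Hnest. apply NNPP. intros Hnone.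
  destruct (compact_cover_nat_bounded (fun k z => r k < rho (a k) z)) as [K HK].
  - intros k z Hz. exists (rho (a k) z - r k). split; [lra |].
    intros w Hw. pose proof (dist_triangle (a k) w z). pose proof (dist_sym z w). lra.
  - intros z. apply NNPP. intros Hz. apply Hnone. exists z. intros k.
    apply Rnot_lt_le. intros Hk. apply Hz. exists k. exact Hk.
  - destruct (HK (a K)) as [k [Hk Hlt]]. pose proof (Hnest k K Hk). lra.
Qed.

Variable d : nat.

Lemma open_in_d_inter U V :
  open_in_d rho d U -> open_in_d rho d V -> open_in_d rho d (fun x => U x /\ V x).
Proof.
  intros HU HV x [Ux Vx]. destruct (HU x Ux) as [e1 [He1 H1]].
  destruct (HV x Vx) as [e2 [He2 H2]]. exists (Rmin e1 e2). split.
  - apply Rmin_glb_lt; assumption.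
  - intros y Hy. split; [apply H1 | apply H2]; intros i;
      eapply Rlt_le_trans; eauto; [apply Rmin_l | apply Rmin_r].
Qed.

Lemma open_in_d_coords (U : idx d -> X -> Prop) :
  (forall i, open_in rho (U i)) -> open_in_d rho d (fun y => forall i, U i (y i)).
Proof.
  intros HU y Hy.
  destruct (idx_uniform d (fun i e => forall z, rho (y i) z < e -> U i z)) as [e [He H]].
  - intros i e e' [_ Hle] Hi z Hz. apply Hi. lra.
  - intros i. exact (HU i (y i) (Hy i)).
  - exists e. split; [exact He |]. intros z Hz i. apply H, Hz.
Qed.

Lemma open_in_d_pairs (f : X -> X) (Rel : idx d -> idx d -> X * X -> Prop) :
  continuous_map rho f -> (forall i j, open_in2 rho (Rel i j)) ->
  open_in_d rho d (fun y => forall i j, Rel i j (f (y i), f (y j))).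
Proof.
  intros Hf HRel y Hy.
  destruct (idx_uniform d (fun i eta => forall j q, rho (f (y i)) (fst q) < eta ->
                                 rho (f (y j)) (snd q) < eta -> Rel i j q)) as [eta [Heta Hnear]].
  - intros i e e' [_ Hle] Hi j q H1 H2. apply Hi; lra.
  - intros i.
    destruct (idx_uniform d (fun j eta => forall q, rho (f (y i)) (fst q) < eta ->
                                   rho (f (y j)) (snd q) < eta -> Rel i j q)) as [eta [Heta H]].
    + intros j e e' [_ Hle] Hj q H1 H2. apply Hj; lra.
    + intros j. exact (HRel i j _ (Hy i j)).
    + exists eta. split; [exact Heta | exact H].
  - destruct (idx_uniform d (fun i del => forall z, rho (y i) z < del ->
                                   rho (f (y i)) (f z) < eta)) as [del [Hdel Hf']].
    + intros i e e' [_ Hle] Hi z Hz. apply Hi. lra.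
    + intros i. exact (Hf (y i) eta Heta).
    + exists del. split; [exact Hdel |]. intros z Hz i j. apply Hnear; apply Hf', Hz.
Qed.

Lemma open_in_d_eventually m (Q : nat -> tuple_sp X d -> Prop) :
  (forall n, open_in_d rho d (Q n)) ->
  open_in_d rho d (fun y => exists n, (m <= n)%nat /\ Q n y).
Proof.
  intros HQ y [n [Hmn Hy]]. destruct (HQ n y Hy) as [e [He H]].
  exists e. split; [exact He |]. intros z Hz. exists n. split; [exact Hmn | apply H, Hz].
Qed.

Lemma dense_in_d_mono (S S' : tuple_sp X d -> Prop) :
  (forall x, S x -> S' x) -> dense_in_d rho d S -> dense_in_d rho d S'.
Proof.
  intros HSS' HS W HW HWne. destruct (HS W HW HWne) as [x [Wx Sx]].
  exists x. split; [exact Wx | apply HSS', Sx].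
Qed.

Lemma dense_in_d_inter (A B : tuple_sp X d -> Prop) :
  open_in_d rho d A -> dense_in_d rho d A -> dense_in_d rho d B ->
  dense_in_d rho d (fun x => A x /\ B x).
Proof.
  intros HAo HA HB W HW HWne.
  destruct (HB (fun x => W x /\ A x)) as [x [[Wx Ax] Bx]].
  - apply open_in_d_inter; assumption.
  - exact (HA W HW HWne).
  - exists x. split; [exact Wx | split; assumption].
Qed.

Definition closed_box (s : tuple_sp X d * R) (y : tuple_sp X d) : Prop :=
  forall i, rho (fst s i) (y i) <= snd s.

Definition open_box (s : tuple_sp X d * R) (y : tuple_sp X d) : Prop :=
  forall i, rho (fst s i) (y i) < snd s.

Lemma open_box_open s : open_in_d rho d (open_box s).
Proof.
  apply (open_in_d_coords (fun i z => rho (fst s i) z < snd s)). intros i. apply open_ball.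
Qed.

Lemma compact_nested_boxes (s : nat -> tuple_sp X d * R) :
  (forall k, 0 <= snd (s k)) ->
  (forall k y, closed_box (s (S k)) y -> closed_box (s k) y) ->
  exists z, forall k, closed_box (s k) z.
Proof.
  intros Hr Hstep.
  assert (Hmono : forall k m y, (k <= m)%nat -> closed_box (s m) y -> closed_box (s k) y).
  { intros k m y Hkm. induction Hkm; auto. }
  assert (Hcenter : forall m, closed_box (s m) (fst (s m))).
  { intros m i. rewrite dist_refl. apply Hr. }
  destruct (choice (fun i z => forall k, rho (fst (s k) i) z <= snd (s k))) as [z Hz].
  - intros i. apply (compact_nested_balls (fun k => fst (s k) i) (fun k => snd (s k))).
    intros k m Hkm. exact (Hmono k m _ Hkm (Hcenter m) i).
  - exists z. intros k i. apply Hz.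
Qed.

Lemma baire_tuple (D : nat -> tuple_sp X d -> Prop) :
  (forall n, open_in_d rho d (D n)) -> (forall n, dense_in_d rho d (D n)) ->
  dense_in_d rho d (fun x => forall n, D n x).
Proof.
  intros HDo HDd W HW HWne.
  set (fits O n (s : tuple_sp X d * R) :=
         0 < snd s /\ forall y, closed_box s y -> O y /\ D n y).
  assert (Hshrink : forall O n, open_in_d rho d O -> (exists x, O x) -> exists s, fits O n s).
  { intros O n HO HOne. destruct (HDd n O HO HOne) as [x [Ox Dx]].
    destruct (open_in_d_inter O (D n) HO (HDo n) x (conj Ox Dx)) as [e [He H]].
    exists (x, e / 2). split; [simpl; lra |]. intros y Hy. apply H.
    intros i. specialize (Hy i). simpl in Hy. lra. }
  destruct (Hshrink W 0%nat HW HWne) as [s0 Hs0].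
  destruct (choice (fun (ks : nat * (tuple_sp X d * R)) s' =>
              0 < snd (snd ks) -> fits (open_box (snd ks)) (fst ks) s')) as [next Hnext].
  { intros [k s]. destruct (Rlt_dec 0 (snd s)) as [Hs | Hs].
    - destruct (Hshrink (open_box s) k (open_box_open s)) as [s' Hs'].
      + exists (fst s). intros i. rewrite dist_refl. exact Hs.
      + exists s'. intros _. exact Hs'.
    - exists s. intros Hs'. contradiction. }
  set (box := nat_rect (fun _ => (tuple_sp X d * R)%type) s0 (fun k s => next (S k, s))).
  assert (Hpos : forall k, 0 < snd (box k)).
  { induction k as [|k IH]; [exact (proj1 Hs0) | exact (proj1 (Hnext (S k, box k) IH))]. }
  assert (Hfit : forall k, fits (open_box (box k)) (S k) (box (S k))).
  { intros k. exact (Hnext (S k, box k) (Hpos k)). }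
  destruct (compact_nested_boxes box) as [z Hz].
  - intros k. left. apply Hpos.
  - intros k y Hy i. left. exact (proj1 (proj2 (Hfit k) y Hy) i).
  - exists z. split; [exact (proj1 (proj2 Hs0 z (Hz 0%nat))) |].
    intros [|n]; [exact (proj2 (proj2 Hs0 z (Hz 0%nat))) |].
    exact (proj2 (proj2 (Hfit n) z (Hz (S n)))).
Qed.

Definition nonempty_open (A : X -> Prop) : Prop := open_in rho A /\ exists x, A x.

Lemma nonempty_open_ball x r : 0 < r -> nonempty_open (fun y => rho x y < r).
Proof. intros Hr. split; [apply open_ball | exists x; rewrite dist_refl; exact Hr]. Qed.

Lemma halving_sequence_separated (a : X) (p : nat -> X) :
  (forall k, rho a (p (S k)) < rho a (p k) / 2) ->
  forall n j k, (j < n)%nat -> (k < n)%nat -> j <> k -> rho a (p n) / 2 < rho (p j) (p k).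
Proof.
  intros Hhalf n.
  assert (Hmono : forall k k', (k <= k')%nat -> rho a (p k') <= rho a (p k)).
  { intros k k' Hkk'. induction Hkk' as [|k' _ IH]; [lra |].
    pose proof (Hhalf k'). pose proof (dist_ge0 a (p k')). lra. }
  assert (Hordered : forall j k, (j < k)%nat -> (j < n)%nat -> rho a (p n) / 2 < rho (p j) (p k)).
  { intros j k Hjk Hjn. pose proof (Hmono (S j) k Hjk). pose proof (Hhalf j).
    pose proof (Hmono j n (Nat.lt_le_incl _ _ Hjn)).
    pose proof (dist_triangle a (p k) (p j)). pose proof (dist_sym (p k) (p j)). lra. }
  intros j k Hj Hk Hjk. destruct (proj1 (Nat.lt_gt_cases j k) Hjk) as [H | H].
  - apply Hordered; assumption.
  - rewrite (dist_sym (p j)). apply Hordered; assumption.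
Qed.

Lemma perfect_separated_points (a : X) :
  (forall x r, 0 < r -> exists y, y <> x /\ rho x y < r) ->
  forall n, exists (p : nat -> X) (s : R), 0 < s /\
    forall j k, (j < n)%nat -> (k < n)%nat -> j <> k -> s < rho (p j) (p k).
Proof.
  intros Hperf n.
  destruct (choice (fun r y => 0 < r -> y <> a /\ rho a y < r)) as [near Hnear].
  { intros r. destruct (Rlt_dec 0 r) as [Hr | Hr].
    - destruct (Hperf a r Hr) as [y Hy]. exists y. intros _. exact Hy.
    - exists a. intros Hr'. contradiction. }
  set (p k := Nat.iter k (fun y => near (rho a y / 2)) (near 1)).
  assert (Hp : forall k, 0 < rho a (p k)).
  { intros k. apply dist_gt0, not_eq_sym. induction k as [|k IH].
    - apply (Hnear 1). lra.
    - change (p (S k)) with (near (rho a (p k) / 2)). apply (Hnear (rho a (p k) / 2)).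
      pose proof (dist_gt0 _ _ (not_eq_sym IH)). lra. }
  exists p, (rho a (p n) / 2). split; [pose proof (Hp n); lra |].
  apply halving_sequence_separated. intros k.
  change (p (S k)) with (near (rho a (p k) / 2)). apply (Hnear (rho a (p k) / 2)).
  pose proof (Hp k). lra.
Qed.

Variable T : X -> X.
Hypothesis Hcont : continuous_map rho T.
Hypothesis Hwm : weakly_mixing rho T.

Definition hits_at (n : nat) (B A : X -> Prop) : Prop := exists x, B x /\ A (iterate T n x).

Lemma continuous_iterate n : continuous_map rho (iterate T n).
Proof.
  induction n as [|n IH]; intros x eps Heps.
  - exists eps. split; [exact Heps | intros y Hy; exact Hy].
  - destruct (Hcont (iterate T n x) eps Heps) as [del1 [Hdel1 H1]].
    destruct (IH x del1 Hdel1) as [del2 [Hdel2 H2]].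
    exists del2. split; [exact Hdel2 |]. intros y Hy. apply H1, H2, Hy.
Qed.

Lemma weakly_mixing_transitive A B :
  nonempty_open A -> nonempty_open B -> exists n, (1 <= n)%nat /\ hits_at n B A.
Proof.
  intros [HA [a Ha]] [HB [b Hb]].
  destruct (Hwm (fun q => A (fst q) /\ A (snd q)) (fun q => B (fst q) /\ B (snd q)))
    as [n [Hn [q [[Hq _] [HTq _]]]]].
  - apply open_in2_prod; assumption.
  - apply open_in2_prod; assumption.
  - exists (a, a). split; assumption.
  - exists (b, b). split; assumption.
  - exists n. split; [exact Hn |]. exists (fst q). split; assumption.
Qed.

(* An isolated point x makes {x} x B(q, rho q x) open; the pair (x, x) never enters it. *)
Lemma weakly_mixing_perfect :
  (exists a b : X, a <> b) -> forall x r, 0 < r -> exists y, y <> x /\ rho x y < r.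
Proof.
  intros [a [b Hab]] x r Hr. apply NNPP. intros Hiso.
  assert (Hsingle : open_in rho (fun y => y = x)).
  { intros y ->. exists r. split; [exact Hr |]. intros z Hz.
    apply NNPP. intros Hzx. apply Hiso. exists z. split; assumption. }
  assert (Hq : exists q, q <> x).
  { destruct (classic (a = x)) as [-> | Ha]; [exists b; congruence | exists a; exact Ha]. }
  destruct Hq as [q Hq].
  destruct (Hwm (fun p => fst p = x /\ rho q (snd p) < rho q x)
                (fun p => fst p = x /\ snd p = x)) as [n [_ [p [[Hp1 Hp2] [Hx Hfar]]]]].
  - apply (open_in2_prod (fun y => y = x) (fun y => rho q y < rho q x));
      [exact Hsingle | apply open_ball].
  - apply (open_in2_prod (fun y => y = x) (fun y => y = x)); exact Hsingle.
  - exists (x, q). simpl. split; [reflexivity |]. rewrite dist_refl. apply dist_gt0, Hq.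
  - exists (x, x). simpl. split; reflexivity.
  - simpl in *. rewrite Hp2 in Hfar. rewrite Hp1 in Hx. rewrite Hx in Hfar. lra.
Qed.

Lemma weakly_mixing_surjective y : exists x, T x = y.
Proof.
  apply NNPP. intros Hy.
  assert (Hgap : forall x, 0 < rho (T x) y).
  { intros x. apply dist_gt0. intros HTx. apply Hy. exists x. exact HTx. }
  destruct (compact_cover_nat_bounded (fun k x => / INR (S k) < rho (T x) y)) as [K HK].
  - intros k. apply (open_in_preimage T (fun z => / INR (S k) < rho z y) Hcont).
    intros z Hz. exists (rho z y - / INR (S k)). split; [lra |].
    intros w Hw. pose proof (dist_triangle z w y). pose proof (dist_sym z w). lra.
  - intros x. destruct (exists_inv_succ_lt _ 0 (Hgap x)) as [k [_ Hk]]. exists k. exact Hk.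
  - assert (HK0 : 0 < / INR (S K)) by (apply Rinv_0_lt_compat, lt_0_INR; lia).
    destruct (weakly_mixing_transitive (fun z => rho y z < / INR (S K)) (fun _ => True))
      as [[|n] [Hn [x [_ Hx]]]]; [apply nonempty_open_ball, HK0 | | lia |].
    + split; [intros z _; exists 1; split; [lra | auto] | exists y; exact I].
    + destruct (HK (iterate T n x)) as [k [Hk Hfar]].
      assert (/ INR (S K) <= / INR (S k))
        by (apply Rinv_le_contravar; [apply lt_0_INR; lia | apply le_INR; lia]).
      change (iterate T (S n) x) with (T (iterate T n x)) in Hx.
      rewrite dist_sym in Hx. lra.
Qed.

Lemma iterate_surjective n y : exists x, iterate T n x = y.
Proof.
  revert y. induction n as [|n IH]; intros y.
  - exists y. reflexivity.
  - destruct (weakly_mixing_surjective y) as [z <-]. destruct (IH z) as [x <-].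
    exists x. reflexivity.
Qed.

(* A time m carrying A1 x B1 into A2 x B2 transfers hitting times: if x lies in
   B1 and T^m x in B2, while T^n x lies in A1 and T^m (T^n x) in A2, then n
   works for both pairs. *)
Lemma hits_pair_reduction A1 B1 A2 B2 :
  nonempty_open A1 -> nonempty_open B1 -> nonempty_open A2 -> nonempty_open B2 ->
  exists A B, nonempty_open A /\ nonempty_open B /\
    forall n, hits_at n B A -> hits_at n B1 A1 /\ hits_at n B2 A2.
Proof.
  intros [HA1 [a1 Ha1]] [HB1 [b1 Hb1]] [HA2 [a2 Ha2]] [HB2 [b2 Hb2]].
  destruct (Hwm (fun q => A2 (fst q) /\ B2 (snd q)) (fun q => A1 (fst q) /\ B1 (snd q)))
    as [m [_ [q [[Hq1 Hq2] [Hq3 Hq4]]]]].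
  - apply open_in2_prod; assumption.
  - apply open_in2_prod; assumption.
  - exists (a2, b2). split; assumption.
  - exists (a1, b1). split; assumption.
  - exists (fun x => A1 x /\ A2 (iterate T m x)), (fun x => B1 x /\ B2 (iterate T m x)).
    split; [|split].
    + split; [apply open_in_inter; [| apply open_in_preimage; [apply continuous_iterate |]]
             | exists (fst q); split]; assumption.
    + split; [apply open_in_inter; [| apply open_in_preimage; [apply continuous_iterate |]]
             | exists (snd q); split]; assumption.
    + intros n [x [[Hx1 Hx2] [Hx3 Hx4]]]. split; [exists x; split; assumption |].
      exists (iterate T m x). split; [exact Hx2 |].
      rewrite <- iterate_add, Nat.add_comm, iterate_add. exact Hx4.
Qed.

Lemma hits_finite_reduction {I : Type} (l : list I) (A B : I -> X -> Prop) A0 B0 :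
  (forall i, nonempty_open (A i) /\ nonempty_open (B i)) ->
  nonempty_open A0 -> nonempty_open B0 ->
  exists A' B', nonempty_open A' /\ nonempty_open B' /\ forall n, hits_at n B' A' ->
    hits_at n B0 A0 /\ forall i, In i l -> hits_at n (B i) (A i).
Proof.
  intros HAB HA0 HB0. induction l as [|i0 l IH].
  - exists A0, B0. split; [|split]; try assumption.
    intros n Hn. split; [exact Hn | intros i []].
  - destruct IH as [A' [B' [HA' [HB' H']]]]. destruct (HAB i0) as [HAi0 HBi0].
    destruct (hits_pair_reduction A' B' (A i0) (B i0) HA' HB' HAi0 HBi0)
      as [A'' [B'' [HA'' [HB'' H'']]]].
    exists A'', B''. split; [|split]; try assumption.
    intros n Hn. destruct (H'' n Hn) as [H1 H2]. destruct (H' n H1) as [H3 H4].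
    split; [exact H3 |]. intros i [<- | Hi]; auto.
Qed.

Lemma weakly_mixing_hits_finite {I : Type} (l : list I) (A B : I -> X -> Prop) :
  (forall i, nonempty_open (A i) /\ nonempty_open (B i)) ->
  exists n, forall i, In i l -> hits_at n (B i) (A i).
Proof.
  intros HAB. destruct l as [|i0 l]; [exists 0%nat; intros i [] |].
  destruct (HAB i0) as [HA0 HB0].
  destruct (hits_finite_reduction l A B (A i0) (B i0) HAB HA0 HB0) as [A' [B' [HA' [HB' H']]]].
  destruct (weakly_mixing_transitive A' B' HA' HB') as [n [_ Hn]].
  exists n. destruct (H' n Hn) as [H0 Hl]. intros i [<- | Hi]; auto.
Qed.

Lemma weakly_mixing_tuple_hits (G : idx d -> X -> Prop) m :
  (forall j, nonempty_open (G j)) ->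
  dense_in_d rho d (fun y => exists n, (m <= n)%nat /\ forall j, G j (iterate T n (y j))).
Proof.
  intros HG W HW [x0 Hx0]. destruct (HW x0 Hx0) as [eps [Heps HWeps]].
  destruct (idx_listing d) as [l Hl].
  destruct (weakly_mixing_hits_finite l (fun j z => G j (iterate T m z))
              (fun j z => rho (x0 j) z < eps)) as [n Hn].
  - intros j. destruct (HG j) as [HGo [g Hg]]. split; [split | apply nonempty_open_ball, Heps].
    + apply open_in_preimage; [apply continuous_iterate | exact HGo].
    + destruct (iterate_surjective m g) as [z Hz]. exists z. rewrite Hz. exact Hg.
  - destruct (choice (fun j z => rho (x0 j) z < eps /\ G j (iterate T m (iterate T n z))))
      as [y Hy]; [intros j; exact (Hn j (Hl j)) |].
    exists y. split; [apply HWeps; intros j; apply Hy |].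
    exists (m + n)%nat. split; [lia |]. intros j. rewrite iterate_add. apply Hy.
Qed.

Definition eventually_pairwise m (Rel : idx d -> idx d -> X * X -> Prop)
    (x : tuple_sp X d) : Prop :=
  exists n, (m <= n)%nat /\ forall i j, Rel i j (iterate T n (x i), iterate T n (x j)).

Definition close_pairs (eps : R) : idx d -> idx d -> X * X -> Prop :=
  fun _ _ q => rho (fst q) (snd q) < eps.

Definition apart_pairs (c : R) : idx d -> idx d -> X * X -> Prop :=
  fun i j q => proj1_sig i <> proj1_sig j -> c < rho (fst q) (snd q).

Lemma open_eventually_pairwise m Rel :
  (forall i j, open_in2 rho (Rel i j)) -> open_in_d rho d (eventually_pairwise m Rel).
Proof.
  intros HRel.
  apply (open_in_d_eventually m (fun n x => forall i j, Rel i j (iterate T n (x i), iterate T n (x j)))).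
  intros n. apply open_in_d_pairs; [apply continuous_iterate | exact HRel].
Qed.

Lemma open_eventually_close m eps : open_in_d rho d (eventually_pairwise m (close_pairs eps)).
Proof. apply open_eventually_pairwise. intros i j. apply open_in2_dist_lt. Qed.

Lemma open_eventually_apart m c : open_in_d rho d (eventually_pairwise m (apart_pairs c)).
Proof.
  apply open_eventually_pairwise. intros i j. apply open_in2_impl. intros _. apply open_in2_dist_gt.
Qed.

Lemma dense_eventually_close (a : X) m eps :
  0 < eps -> dense_in_d rho d (eventually_pairwise m (close_pairs eps)).
Proof.
  intros Heps.
  assert (Hball : nonempty_open (fun z => rho a z < eps / 2)) by (apply nonempty_open_ball; lra).
  eapply dense_in_d_mono;
    [| exact (weakly_mixing_tuple_hits (fun _ z => rho a z < eps / 2) m (fun _ => Hball))].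
  intros x [n [Hmn Hn]]. exists n. split; [exact Hmn |]. intros i j.
  pose proof (Hn i). pose proof (Hn j). unfold close_pairs; simpl.
  pose proof (dist_triangle (iterate T n (x i)) a (iterate T n (x j))).
  pose proof (dist_sym (iterate T n (x i)) a). lra.
Qed.

Lemma dense_eventually_apart (p : nat -> X) s m :
  0 < s -> (forall j k, (j < d)%nat -> (k < d)%nat -> j <> k -> s < rho (p j) (p k)) ->
  dense_in_d rho d (eventually_pairwise m (apart_pairs (s / 2))).
Proof.
  intros Hs Hsep.
  assert (Hballs : forall j : idx d, nonempty_open (fun z => rho (p (proj1_sig j)) z < s / 4))
    by (intros j; apply nonempty_open_ball; lra).
  eapply dense_in_d_mono;
    [| exact (weakly_mixing_tuple_hits (fun j z => rho (p (proj1_sig j)) z < s / 4) m Hballs)].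
  intros x [n [Hmn Hn]]. exists n. split; [exact Hmn |]. intros i j Hij.
  pose proof (Hn i). pose proof (Hn j). simpl.
  pose proof (Hsep _ _ (proj2_sig i) (proj2_sig j) Hij).
  set (u := iterate T n (x i)) in *. set (v := iterate T n (x j)) in *.
  pose proof (dist_triangle (p (proj1_sig i)) u (p (proj1_sig j))).
  pose proof (dist_triangle u v (p (proj1_sig j))).
  pose proof (dist_sym v (p (proj1_sig j))). lra.
Qed.

Lemma li_yorke_of_eventually delta c (x : tuple_sp X d) :
  delta < c ->
  (forall m, eventually_pairwise m (close_pairs (/ INR (S m))) x) ->
  (forall m, eventually_pairwise m (apart_pairs c) x) ->
  li_yorke_tuple rho T d delta x.
Proof.
  intros Hdc Hclose Hapart. split.
  - intros eps Heps N. destruct (exists_inv_succ_lt eps N Heps) as [m [HNm Hm']].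
    destruct (Hclose m) as [n [Hmn Hn]]. exists n. split; [lia |].
    intros i j. specialize (Hn i j). unfold close_pairs in Hn. cbn [fst snd] in Hn. lra.
  - exists c. split; [exact Hdc |]. intros N. destruct (Hapart N) as [n [HNn Hn]].
    exists n. split; [exact HNn |]. intros i j Hij. exact (Hn i j Hij).
Qed.

Lemma residual_li_yorke_of_separated (p : nat -> X) s :
  0 < s -> (forall j k, (j < d)%nat -> (k < d)%nat -> j <> k -> s < rho (p j) (p k)) ->
  residual_d rho d (li_yorke_tuple rho T d (s / 4)).
Proof.
  intros Hs Hsep.
  set (D m x := eventually_pairwise m (close_pairs (/ INR (S m))) x /\
                eventually_pairwise m (apart_pairs (s / 2)) x).
  assert (HDo : forall m, open_in_d rho d (D m)).
  { intros m. apply open_in_d_inter; [apply open_eventually_close | apply open_eventually_apart]. }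
  exists (fun x => forall m, D m x). split; [| split].
  - exists D. split; [exact HDo | tauto].
  - apply baire_tuple; [exact HDo |]. intros m.
    apply dense_in_d_inter; [apply open_eventually_close | |].
    + apply (dense_eventually_close (p 0%nat)). apply Rinv_0_lt_compat, lt_0_INR. lia.
    + apply (dense_eventually_apart p); assumption.
  - intros x Hx. apply (li_yorke_of_eventually (s / 4) (s / 2)); [lra | |]; intros m; apply Hx.
Qed.

End CompactDynamics.

Theorem mainTheorem9 (X : Type) (rho : X -> X -> R) (T : X -> X)
  (Hmetric : is_metric rho) (Hcompact : compact_metric rho)
  (Htwo : exists a b : X, a <> b)
  (Hcont : continuous_map rho T) (Hwm : weakly_mixing rho T) :
  forall d : nat, (1 < d)%nat ->
    exists delta_d : R, 0 < delta_d /\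
      residual_d rho d (li_yorke_tuple rho T d delta_d).
Proof.
  intros d _.
  pose proof (weakly_mixing_perfect X rho Hmetric T Hwm Htwo) as Hperfect.
  destruct Htwo as [a _].
  destruct (perfect_separated_points X rho Hmetric a Hperfect d) as [p [s [Hs Hsep]]].
  exists (s / 4). split; [lra |].
  exact (residual_li_yorke_of_separated X rho Hmetric Hcompact d T Hcont Hwm p s Hs Hsep).
Qed.
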